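(* Let $V\in{}_B\mathrm{Rep}^A$ and $W\in{}_A\mathrm{Rep}^C$. Then there is a unitary (inner-product preserving, bijective) isomorphism of unitary DK-representations between ${}_V\mathrm{Ind}(W)$ and $\mathrm{Ind}^W(V)$, both equipped with the tensor product inner product on $V\odot W$.
   Context: $A$ is a CQG Hopf $*$-algebra: a complex Hopf algebra $(A,\Delta_A,\varepsilon_A,S_A)$ with an anti-linear involution making it a $*$-algebra with $\Delta_A$ a $*$-homomorphism, admitting a state $\Phi_A$ with $(\Phi_A\otimes\mathrm{id})\Delta_A(a)=\Phi_A(a)1=(\mathrm{id}\otimes\Phi_A)\Delta_A(a)$. Put $a^\dagger=S_A(a)^*$. $B\subseteq A$ is a unital right coideal $*$-subalgebra ($\Delta_A(B)\subseteq B\odot A$). Let $B_+=B\cap\ker\varepsilon_A$, $C=A/AB_+$ with quotient map $\pi_C$; $C$ is a coalgebra (comultiplication induced by $\Delta_A$), a left $A$-module via $a\cdot\pi_C(a')=\pi_C(aa')$, with anti-linear involution $\pi_C(a)^\dagger=\pi_C(a^\dagger)$. Sweedler notation is used. For $(X,Y)\in\{(B,A),(A,C),(B,C)\}$, ${}_X\mathrm{Mod}^Y$ is the category of left $X$-modules $V$ with a right $Y$-comodule structure $v\mapsto v_{(0)}\otimes v_{(1)}$ such that $(xv)_{(0)}\otimes(xv)_{(1)}=x_{(1)}v_{(0)}\otimes x_{(2)}v_{(1)}$. ${}_X\mathrm{Rep}^Y$ consists of those $V$ which are pre-Hilbert spaces with $\langle v,xw\rangle=\langle x^*v,w\rangle$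 and $\langle v,w_{(0)}\rangle w_{(1)}=\langle v_{(0)},w\rangle v_{(1)}^\dagger$ for all $v,w\in V$, $x\in X$. ${}_V\mathrm{Ind}(W)$: $V\odot W$ with $b(v\otimes w)=bv\otimes w$ and coaction $v\otimes w\mapsto v_{(0)}\otimes w_{(0)}\otimes v_{(1)}w_{(1)}$. $\mathrm{Ind}^W(V)$: $V\odot W$ with $b(v\otimes w)=b_{(1)}v\otimes b_{(2)}w$ and coaction $v\otimes w\mapsto v\otimes w_{(0)}\otimes w_{(1)}$. Both are in ${}_B\mathrm{Rep}^C$ with the tensor product inner product. *)

(* Algebraic tensor products V (.) W are represented by finite lists of pairs
   (formal sums of simple tensors); equality in the tensor product is defined by the
   universal property (all bilinear maps into any vector space agree).  Quotients
   by a subspace I of a tensor factor (used for C = A / A B_+) are handled by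
   requiring the bilinear maps to vanish when that factor lies in I.
   Sweedler sums  Delta(a) = a_(1) (x) a_(2),  coactions  v_(0) (x) v_(1)  are
   given by representatives (lists). *)
From HB Require Import structures.
From mathcomp Require Import all_boot all_algebra.
From mathcomp Require Import complex reals.
Set Implicit Arguments. Unset Strict Implicit. Unset Printing Implicit Defensive.
Import GRing.Theory Num.Theory.
Local Open Scope ring_scope.

Section TensorDefs.
Variable K : numClosedFieldType.

Definition zeroP (U : lmodType K) (x : U) : Prop := x = 0.

Definition bilin (U1 U2 M : lmodType K) (f : U1 -> U2 -> M) : Prop :=
  (forall c x x' y, f (c *: x + x') y = c *: f x y + f x' y) /\
  (forall c x y y', f x (c *: y + y') = c *: f x y + f x y').

Definition trilin (U1 U2 U3 M : lmodType K) (f : U1 -> U2 -> U3 -> M) : Prop :=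
  (forall c x x' y z, f (c *: x + x') y z = c *: f x y z + f x' y z) /\
  (forall c x y y' z, f x (c *: y + y') z = c *: f x y z + f x y' z) /\
  (forall c x y z z', f x y (c *: z + z') = c *: f x y z + f x y z').

(* equality in U1 (.) (U2 / I2) of two formal sums of simple tensors *)
Definition tens2 (U1 U2 : lmodType K) (I2 : U2 -> Prop)
    (s t : seq (U1 * U2)) : Prop :=
  forall (M : lmodType K) (f : U1 -> U2 -> M), bilin f ->
    (forall x y, I2 y -> f x y = 0) ->
    \sum_(p <- s) f p.1 p.2 = \sum_(p <- t) f p.1 p.2.

(* equality in U1 (.) (U2 / I2) (.) (U3 / I3) *)
Definition tens3 (U1 U2 U3 : lmodType K) (I2 : U2 -> Prop) (I3 : U3 -> Prop)
    (s t : seq (U1 * U2 * U3)) : Prop :=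
  forall (M : lmodType K) (f : U1 -> U2 -> U3 -> M), trilin f ->
    (forall x y z, I2 y -> f x y z = 0) ->
    (forall x y z, I3 z -> f x y z = 0) ->
    \sum_(p <- s) f p.1.1 p.1.2 p.2 = \sum_(p <- t) f p.1.1 p.1.2 p.2.

Definition scale1 (U1 U2 : lmodType K) (c : K) (s : seq (U1 * U2)) :=
  [seq (c *: p.1, p.2) | p <- s].
Definition scale2 (U1 U2 : lmodType K) (c : K) (s : seq (U1 * U2)) :=
  [seq (p.1, c *: p.2) | p <- s].

(* pre-Hilbert space; inner product conjugate-linear in the first and linear in
   the second variable *)
Definition preHilbert (V : lmodType K) (ip : V -> V -> K) : Prop :=
  [/\ forall u c v w, ip u (c *: v + w) = c * ip u v + ip u w,
      forall u v, ip u v = (ip v u)^*,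
      forall v, 0 <= ip v v &
      forall v, ip v v = 0 -> v = 0].

Record isCQGHopfStar (A : algType K) (Delta : A -> seq (A * A)) (eps : A -> K)
    (S : A -> A) (st : A -> A) : Prop := {
  hD_lin : forall c a b,
    tens2 (@zeroP A) (Delta (c *: a + b)) (scale1 c (Delta a) ++ Delta b);
  hD_mul : forall a b, tens2 (@zeroP A) (Delta (a * b))
             [seq (p.1 * q.1, p.2 * q.2) | p <- Delta a, q <- Delta b];
  hD_one : tens2 (@zeroP A) (Delta 1) [:: (1, 1)];
  hD_coassoc : forall a, tens3 (@zeroP A) (@zeroP A)
             [seq (q.1, q.2, p.2) | p <- Delta a, q <- Delta p.1]
             [seq (p.1, q.1, q.2) | p <- Delta a, q <- Delta p.2];
  he_lin : forall c a b, eps (c *: a + b) = c * eps a + eps b;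
  he_mul : forall a b, eps (a * b) = eps a * eps b;
  he_one : eps 1 = 1;
  he_counitl : forall a, \sum_(p <- Delta a) eps p.1 *: p.2 = a;
  he_counitr : forall a, \sum_(p <- Delta a) eps p.2 *: p.1 = a;
  hS_lin : forall c a b, S (c *: a + b) = c *: S a + S b;
  hS_antipl : forall a, \sum_(p <- Delta a) S p.1 * p.2 = eps a *: 1;
  hS_antipr : forall a, \sum_(p <- Delta a) p.1 * S p.2 = eps a *: 1;
  hst_antilin : forall c a b, st (c *: a + b) = c^* *: st a + st b;
  hst_antimul : forall a b, st (a * b) = st b * st a;
  hst_invol : forall a, st (st a) = a;
  hD_star : forall a, tens2 (@zeroP A) (Delta (st a))
             [seq (st p.1, st p.2) | p <- Delta a];
  hHaar : exists Phi : A -> K,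
    [/\ forall c a b, Phi (c *: a + b) = c * Phi a + Phi b,
        Phi 1 = 1,
        forall a, 0 <= Phi (st a * a),
        forall a, \sum_(p <- Delta a) Phi p.1 *: p.2 = Phi a *: 1 &
        forall a, \sum_(p <- Delta a) Phi p.2 *: p.1 = Phi a *: 1]
}.

Definition isRightCoidealStarSubalg (A : algType K) (Delta : A -> seq (A * A))
    (st : A -> A) (B : A -> Prop) : Prop :=
  [/\ B 1,
      forall c a b, B a -> B b -> B (c *: a + b),
      forall a b, B a -> B b -> B (a * b),
      forall a, B a -> B (st a) &
      forall b, B b -> exists r : seq (A * A),
        tens2 (@zeroP A) (Delta b) r /\ {in r, forall p, B p.1}].

Definition ABplus (A : algType K) (eps : A -> K) (B : A -> Prop) (a : A) : Prop :=
  exists r : seq (A * A), {in r, forall p, B p.2 /\ eps p.2 = 0} /\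
                          a = \sum_(p <- r) p.1 * p.2.

(* V in _X Rep^Y, where X is a subalgebra of A given by a predicate, Y = A / I
   (I = zeroP for Y = A, I = A B_+ for Y = C).  act : A -> V -> V is the
   X-action (only its values on X matter); co v is a representative of
   v_(0) (x) v_(1) in V (.) Y. *)
Record isDKRep (A : algType K) (Delta : A -> seq (A * A)) (eps : A -> K)
    (S : A -> A) (st : A -> A) (X : A -> Prop) (I : A -> Prop)
    (V : lmodType K) (ip : V -> V -> K) (act : A -> V -> V)
    (co : V -> seq (V * A)) : Prop := {
  r_preHilbert : preHilbert ip;
  r_act_lin : forall x, X x -> forall c v w, act x (c *: v + w) = c *: act x v + act x w;
  r_act_linl : forall c x y v, X x -> X y -> act (c *: x + y) v = c *: act x v + act y v;
  r_act_one : forall v, act 1 v = v;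
  r_act_mul : forall x y v, X x -> X y -> act (x * y) v = act x (act y v);
  r_co_lin : forall c v w, tens2 I (co (c *: v + w)) (scale1 c (co v) ++ co w);
  r_co_counit : forall v, \sum_(p <- co v) eps p.2 *: p.1 = v;
  r_co_coassoc : forall v, tens3 I I
      [seq (q.1, q.2, p.2) | p <- co v, q <- co p.1]
      [seq (p.1, q.1, q.2) | p <- co v, q <- Delta p.2];
  r_compat : forall x, X x -> forall r : seq (A * A),
      tens2 (@zeroP A) (Delta x) r -> {in r, forall p, X p.1} ->
      forall v, tens2 I (co (act x v))
                        [seq (act p.1 q.1, p.2 * q.2) | p <- r, q <- co v];
  r_ip_act : forall x, X x -> forall v w, ip v (act x w) = ip (act (st x) v) w;
  r_ip_co : forall v w,
      I (\sum_(p <- co w) ip v p.1 *: p.2 - \sum_(p <- co v) ip p.1 w *: st (S p.2))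
}.

Definition ext2 (V W V' W' : Type) (T : V -> W -> seq (V' * W'))
    (s : seq (V * W)) : seq (V' * W') :=
  flatten [seq T p.1 p.2 | p <- s].

Definition ip2 (V W : lmodType K) (ipV : V -> V -> K) (ipW : W -> W -> K)
    (s t : seq (V * W)) : K :=
  \sum_(p <- s) \sum_(q <- t) ipV p.1 q.1 * ipW p.2 q.2.

Section Ind.
Variables (A : algType K) (V W : lmodType K).
Variables (actV : A -> V -> V) (coV : V -> seq (V * A))
          (actW : A -> W -> W) (coW : W -> seq (W * A)).

Definition actIndL (b : A) (s : seq (V * W)) : seq (V * W) :=
  [seq (actV b p.1, p.2) | p <- s].
Definition coIndL (s : seq (V * W)) : seq (V * W * A) :=
  flatten [seq [seq (q.1, q'.1, q.2 * q'.2) | q <- coV p.1, q' <- coW p.2] | p <- s].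

(* Ind^W(V); r is a representative of Delta(b) in B (.) A *)
Definition actIndR (r : seq (A * A)) (s : seq (V * W)) : seq (V * W) :=
  [seq (actV q.1 p.1, actW q.2 p.2) | p <- s, q <- r].
Definition coIndR (s : seq (V * W)) : seq (V * W * A) :=
  [seq (p.1, q.1, q.2) | p <- s, q <- coW p.2].
End Ind.

(* T ⊗ id applied to a formal sum in (V (.) W) (.) C *)
Definition ext3 (V W A : Type) (T : V -> W -> seq (V * W))
    (u : seq (V * W * A)) : seq (V * W * A) :=
  [seq (q.1, q.2, p.2) | p <- u, q <- T p.1.1 p.1.2].

End TensorDefs.

From HB Require Import structures.
From mathcomp Require Import all_boot all_algebra.
From mathcomp Require Import complex reals.
Set Implicit Arguments. Unset Strict Implicit. Unset Printing Implicit Defensive.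
Import GRing.Theory Num.Theory.
Local Open Scope ring_scope.

(* The isomorphism is T (v ⊗ w) = v_(0) ⊗ v_(1) w, with inverse
   v ⊗ w |-> v_(0) ⊗ S(v_(1)) w: coassociativity of the coaction of V rewrites
   either composite as v_(0) ⊗ x v_(1)_(1) y v_(1)_(2) w with {x, y} = {S, 1},
   and the antipode and counit axioms collapse this to v ⊗ w.  T intertwines the
   B-actions by the module-comodule compatibility of V, and the C-coactions by
   that of W followed by coassociativity on V.  For the inner products,
   unitarity of the coaction of V, <v, v'_(0)> v'_(1) = <v_(0), v'> v_(1)^†,
   moves the coaction of v' onto v, after which the same antipode cancellation
   as for the inverse applies. *)

Section Multilinear.
Variable K : numClosedFieldType.

Lemma linear_id (U : lmodType K) : linear (@id U).
Proof. by move=> c x y. Qed.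

Lemma linear_fun_sum (U M : lmodType K) (g : U -> M) (I : Type) (r : seq I)
    (F : I -> U) :
  linear g -> g (\sum_(i <- r) F i) = \sum_(i <- r) g (F i).
Proof.
by move=> lin_g; exact: (linear_sum (HB.pack g (GRing.isLinear.Build _ _ _ _ g lin_g))).
Qed.

Lemma linear_fun0 (U M : lmodType K) (g : U -> M) : linear g -> g 0 = 0.
Proof.
by move=> lin_g; have := linear_fun_sum [::] (fun _ : unit => 0) lin_g; rewrite !big_nil.
Qed.

Lemma bilin_linl (U1 U2 M : lmodType K) (f : U1 -> U2 -> M) :
  bilin f -> forall y, linear (f^~ y).
Proof. by case=> linl _ y c x x'; exact: linl. Qed.

Lemma bilin_linr (U1 U2 M : lmodType K) (f : U1 -> U2 -> M) :
  bilin f -> forall x, linear (f x).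
Proof. by case=> _ linr x c y y'; exact: linr. Qed.

Lemma bilin_compr (U1 U2 U3 M : lmodType K) (f : U1 -> U2 -> M) (g : U3 -> U2) :
  bilin f -> linear g -> bilin (fun x z => f x (g z)).
Proof.
move=> [linl linr] lin_g; split=> c x x' y; first exact: linl.
by rewrite lin_g linr.
Qed.

Lemma trilin_comp (U1 U2 U3 U4 M : lmodType K) (f : U1 -> U2 -> M)
    (m : U3 -> U4 -> U2) :
  bilin f -> bilin m -> trilin (fun x y z => f x (m y z)).
Proof.
move=> [fl fr] [ml mr]; split; first by move=> *; rewrite fl.
by split=> c x y y' z; rewrite (ml, mr) fr.
Qed.

Lemma trilin_sum (U1 U2 U3 M : lmodType K) (I : Type) (r : seq I)
    (F : I -> U1 -> U2 -> U3 -> M) :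
  (forall i, trilin (F i)) -> trilin (fun x y z => \sum_(i <- r) F i x y z).
Proof.
move=> linF; split; last split; move=> c x y z t; rewrite scaler_sumr -big_split;
  by apply: eq_bigr => i _; case: (linF i) => F1 [F2 F3]; rewrite ?F1 ?F2 ?F3.
Qed.

Lemma trilin_bilin (U1 U2 U3 M : lmodType K) (f : U1 -> U2 -> U3 -> M) :
  trilin f -> forall x, bilin (f x).
Proof. by case=> _ [f2 f3] x; split=> c y y' z; [exact: f2 | exact: f3]. Qed.

Lemma trilin_comp23 (U1 U2 U3 U2' U3' M : lmodType K) (f : U1 -> U2 -> U3 -> M)
    (g : U2' -> U2) (h : U3' -> U3) :
  trilin f -> linear g -> linear h -> trilin (fun x y z => f x (g y) (h z)).
Proof.
move=> [f1 [f2 f3]] lin_g lin_h; split; first by move=> *; rewrite f1.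
by split=> *; rewrite (lin_g, lin_h) (f2, f3).
Qed.

Lemma preHilbert_linr (U : lmodType K) (ip : U -> U -> K) :
  preHilbert ip -> forall u, linear (ip u : U -> K^o).
Proof. by case=> ip_lin _ _ _ u c x y; exact: ip_lin. Qed.

Lemma preHilbert_conj (U : lmodType K) (ip : U -> U -> K) :
  preHilbert ip -> forall u v, ip u v = (ip v u)^*.
Proof. by case. Qed.

Lemma bilin_mul (A : algType K) (g h : A -> A) :
  linear g -> linear h -> bilin (fun a b => g a * h b).
Proof.
move=> lin_g lin_h; split=> c x x' y; first by rewrite lin_g mulrDl -scalerAl.
by rewrite lin_h mulrDr scalerAr.
Qed.

Lemma big_scale1 (U1 U2 M : lmodType K) (f : U1 -> U2 -> M) c (s : seq (U1 * U2)) :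
  bilin f -> \sum_(p <- scale1 c s) f p.1 p.2 = c *: \sum_(p <- s) f p.1 p.2.
Proof.
move=> bf; rewrite big_map scaler_sumr; apply: eq_bigr => p _.
exact: (scalable_linear (bilin_linl bf _)).
Qed.

Lemma tens2_bilin (U1 U2 : lmodType K) (s t : seq (U1 * U2)) :
  tens2 (@zeroP _ U2) s t -> forall (M : lmodType K) (f : U1 -> U2 -> M), bilin f ->
  \sum_(p <- s) f p.1 p.2 = \sum_(p <- t) f p.1 p.2.
Proof.
by move=> eq_st M f bf; apply: eq_st => // x y ->; exact: linear_fun0 (bilin_linr bf x).
Qed.

Lemma tens3_trilin (U1 U2 U3 : lmodType K) (s t : seq (U1 * U2 * U3)) :
  tens3 (@zeroP _ U2) (@zeroP _ U3) s t ->
  forall (M : lmodType K) (f : U1 -> U2 -> U3 -> M), trilin f ->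
  \sum_(p <- s) f p.1.1 p.1.2 p.2 = \sum_(p <- t) f p.1.1 p.1.2 p.2.
Proof.
move=> eq_st M f tf; have [_ [f2 f3]] := tf.
apply: eq_st => // [x y z ->|x y z ->].
  by apply: (@linear_fun0 _ _ (f x ^~ z)) => c a b; exact: f2.
by apply: (@linear_fun0 _ _ (f x y)) => c a b; exact: f3.
Qed.

End Multilinear.

Section TensorMaps.
Variable K : numClosedFieldType.

(* Equality in a tensor product ([tens2]) is tested against all bilinear maps,
   so a map [T] given on simple tensors is handled through the pullbacks
   [tens_pull T f] of bilinear maps [f]; [tens_cancel T T'] says that [T'] is
   a left inverse of [T]. *)
Definition tens_pull (V W V' W' : lmodType K) (M : nmodType)
    (T : V -> W -> seq (V' * W')) (f : V' -> W' -> M) (v : V) (w : W) : M :=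
  \sum_(p <- T v w) f p.1 p.2.

Definition tens_linear (V W V' W' : lmodType K) (T : V -> W -> seq (V' * W')) :=
  forall (M : lmodType K) (f : V' -> W' -> M), bilin f -> bilin (tens_pull T f).

Definition tens_cancel (V W V' W' : lmodType K)
    (T : V -> W -> seq (V' * W')) (T' : V' -> W' -> seq (V * W)) :=
  forall (M : lmodType K) (f : V -> W -> M), bilin f ->
    tens_pull T (tens_pull T' f) =2 f.

Lemma big_ext2 (V W V' W' : Type) (M : nmodType) (T : V -> W -> seq (V' * W'))
    (s : seq (V * W)) (F : V' * W' -> M) :
  \sum_(p <- ext2 T s) F p = \sum_(q <- s) \sum_(p <- T q.1 q.2) F p.
Proof. by rewrite big_flatten big_map. Qed.

Variables V W V' W' : lmodType K.
Implicit Type T : V -> W -> seq (V' * W').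

Lemma tens_linear_linl T : tens_linear T -> forall c v v' w,
  tens2 (@zeroP _ W') (T (c *: v + v') w) (scale1 c (T v w) ++ T v' w).
Proof.
move=> linT c v v' w M f bf _; rewrite big_cat big_scale1 //.
by case: (linT M f bf) => linl _; exact: linl.
Qed.

Lemma tens_linear_linr T : tens_linear T -> forall c v w w',
  tens2 (@zeroP _ W') (T v (c *: w + w')) (scale1 c (T v w) ++ T v w').
Proof.
move=> linT c v w w' M f bf _; rewrite big_cat big_scale1 //.
by case: (linT M f bf) => _ linr; exact: linr.
Qed.

Lemma ext2_inj T (T' : V' -> W' -> seq (V * W)) :
  tens_linear T' -> tens_cancel T T' -> forall s t,
  tens2 (@zeroP _ W') (ext2 T s) (ext2 T t) -> tens2 (@zeroP _ W) s t.
Proof.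
move=> linT' TK s t eq_st M f bf _.
have pullK u :
    \sum_(p <- u) f p.1 p.2 = \sum_(p <- ext2 T u) tens_pull T' f p.1 p.2.
  by rewrite big_ext2; apply: eq_bigr => q _; rewrite -[LHS](TK M f bf).
by rewrite !pullK; apply: tens2_bilin eq_st _ _ (linT' M f bf).
Qed.

Lemma ext2_surj T (T' : V' -> W' -> seq (V * W)) :
  tens_cancel T' T -> forall t, exists s, tens2 (@zeroP _ W') (ext2 T s) t.
Proof.
move=> TK t; exists (ext2 T' t) => M f bf _.
rewrite big_ext2 (big_ext2 T' t (fun q => tens_pull T f q.1 q.2)).
by apply: eq_bigr => r _; exact: TK.
Qed.

End TensorMaps.

Lemma ip2_ext2 (K : numClosedFieldType) (V W : lmodType K)
    (ipV : V -> V -> K) (ipW : W -> W -> K) (T : V -> W -> seq (V * W)) :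
  (forall v w v' w', ip2 ipV ipW (T v w) (T v' w') = ipV v v' * ipW w w') ->
  forall s t, ip2 ipV ipW (ext2 T s) (ext2 T t) = ip2 ipV ipW s t.
Proof.
move=> ipT s t; rewrite /ip2 big_ext2; apply: eq_bigr => p _.
under eq_bigr => x _ do rewrite big_ext2.
by rewrite exchange_big; apply: eq_bigr => q _; exact: ipT.
Qed.

Section InducedRepresentations.
Variable K : numClosedFieldType.
Variables (A : algType K) (Delta : A -> seq (A * A)) (eps : A -> K) (S st : A -> A).
Hypothesis HA : isCQGHopfStar Delta eps S st.
Variables (B : A -> Prop) (V : lmodType K) (ipV : V -> V -> K) (actV : A -> V -> V)
  (coV : V -> seq (V * A)).
Hypothesis HV : isDKRep Delta eps S st B (@zeroP _ A) ipV actV coV.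
Variables (W : lmodType K) (ipW : W -> W -> K) (actW : A -> W -> W)
  (coW : W -> seq (W * A)).
Hypothesis HW : isDKRep Delta eps S st (fun _ => True) (ABplus eps B) ipW actW coW.

(* [twist id] is v ⊗ w |-> v_(0) ⊗ v_(1) w and [twist S] its inverse
   v ⊗ w |-> v_(0) ⊗ S(v_(1)) w. *)
Definition twist (g : A -> A) (v : V) (w : W) : seq (V * W) :=
  [seq (p.1, actW (g p.2) w) | p <- coV v].

Lemma actW_linl w : linear (actW^~ w).
Proof. by move=> c x y; exact: (r_act_linl HW). Qed.

Lemma actW_linr a : linear (actW a).
Proof. by move=> c x y; exact: (r_act_lin HW). Qed.

Lemma linear_big_coV (M : lmodType K) (g : V -> A -> M) : bilin g ->
  linear (fun v => \sum_(p <- coV v) g p.1 p.2).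
Proof.
move=> bg c v v'; rewrite (tens2_bilin (r_co_lin HV c v v') bg) big_cat.
by rewrite big_scale1.
Qed.

Lemma coV_counit (M : lmodType K) (F : V -> M) v : linear F ->
  \sum_(p <- coV v) eps p.2 *: F p.1 = F v.
Proof.
move=> lin_F; rewrite -{2}(r_co_counit HV v) linear_fun_sum //.
by apply: eq_bigr => p _; rewrite (scalable_linear lin_F).
Qed.

Lemma coV_coassoc (M : lmodType K) (h : V -> A -> A -> M) v : trilin h ->
  \sum_(p <- coV v) \sum_(q <- coV p.1) h q.1 q.2 p.2 =
  \sum_(p <- coV v) \sum_(q <- Delta p.2) h p.1 q.1 q.2.
Proof.
by move=> th; have := tens3_trilin (r_co_coassoc HV v) th; rewrite !big_allpairs_dep.
Qed.

Lemma tens_pull_twist (M : nmodType) g (f : V -> W -> M) v w :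
  tens_pull (twist g) f v w = \sum_(p <- coV v) f p.1 (actW (g p.2) w).
Proof. exact: big_map. Qed.

Lemma twist_linear g : linear g -> tens_linear (twist g).
Proof.
move=> lin_g M f bf; split=> c x x' y; rewrite !tens_pull_twist.
  apply: (linear_big_coV (g := fun x a => f x (actW (g a) y))).
  by apply: bilin_compr bf _ => d a b; rewrite lin_g actW_linl.
rewrite scaler_sumr -big_split; apply: eq_bigr => p _ /=.
by rewrite actW_linr (bilin_linr bf).
Qed.

Lemma tens_pull_twist_twist g h (M : lmodType K) (f : V -> W -> M) v w :
  linear g -> linear h -> bilin f ->
  tens_pull (twist g) (tens_pull (twist h) f) v w =
  \sum_(p <- coV v) \sum_(q <- Delta p.2) f p.1 (actW (h q.1 * g q.2) w).
Proof.
move=> lin_g lin_h bf; rewrite tens_pull_twist.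
under eq_bigr => p _ do rewrite tens_pull_twist.
under eq_bigr => p _ do under eq_bigr => q _ do rewrite -(r_act_mul HW) //.
apply: (coV_coassoc (h := fun x y z => f x (actW (h y * g z) w))).
exact: trilin_comp (bilin_compr bf (actW_linl w)) (bilin_mul lin_h lin_g).
Qed.

Lemma twist_cancel g h : linear g -> linear h ->
  (forall a, \sum_(q <- Delta a) h q.1 * g q.2 = eps a *: 1) ->
  tens_cancel (twist g) (twist h).
Proof.
move=> lin_g lin_h antipode M f bf v w; rewrite tens_pull_twist_twist //.
have collapse p :
    \sum_(q <- Delta p.2) f p.1 (actW (h q.1 * g q.2) w) = eps p.2 *: f p.1 w.
  have lin_F : linear (fun a => f p.1 (actW a w)).
    by move=> c a b; rewrite actW_linl (bilin_linr bf).
  rewrite -(linear_fun_sum (Delta p.2) (fun q => h q.1 * g q.2) lin_F) antipode.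
  by rewrite (scalable_linear lin_F) /= (r_act_one HW).
under eq_bigr => p _ do rewrite collapse.
exact: coV_counit (bilin_linl bf w).
Qed.

Lemma twist_idK : tens_cancel (twist id) (twist S).
Proof.
by apply: twist_cancel; [exact: linear_id | exact: (hS_lin HA) | exact: (hS_antipl HA)].
Qed.

Lemma twist_SK : tens_cancel (twist S) (twist id).
Proof.
by apply: twist_cancel; [exact: (hS_lin HA) | exact: linear_id | exact: (hS_antipr HA)].
Qed.

Lemma twist_act b : B b -> forall r : seq (A * A),
  tens2 (@zeroP _ A) (Delta b) r -> {in r, forall p, B p.1} ->
  forall s, tens2 (@zeroP _ W) (ext2 (twist id) (actIndL actV b s))
                               (actIndR actV actW r (ext2 (twist id) s)).
Proof.
move=> Bb r Dr Br s M f bf _.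
rewrite big_ext2 /actIndL big_map /actIndR big_allpairs_dep.
rewrite (big_ext2 _ s (fun p => \sum_(q <- r) f (actV q.1 p.1) (actW q.2 p.2))).
apply: eq_bigr => p _ /=; rewrite !big_map /=.
rewrite (tens2_bilin (r_compat HV Bb Dr Br p.1) (bilin_compr bf (actW_linl p.2))).
rewrite big_allpairs_dep /= exchange_big /=.
by apply: eq_bigr => q _; apply: eq_bigr => d _; rewrite (r_act_mul HW).
Qed.

Lemma big_coW_act (M : lmodType K) (f : W -> A -> M) a w : bilin f ->
  (forall y c, ABplus eps B c -> f y c = 0) ->
  \sum_(q <- coW (actW a w)) f q.1 q.2 =
  \sum_(d <- Delta a) \sum_(q <- coW w) f (actW d.1 q.1) (d.2 * q.2).
Proof.
move=> bf f0; transitivity (\sum_(p <- [seq (actW d.1 q.1, d.2 * q.2) |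
  d <- Delta a, q <- coW w]) f p.1 p.2); last by rewrite big_allpairs_dep.
have compat :=
  r_compat HW (x := a) I (r := Delta a) (fun _ _ _ _ => erefl) (fun _ _ => I) w.
exact: compat _ _ bf f0.
Qed.

Lemma twist_coact s : tens3 (@zeroP _ W) (ABplus eps B)
  (coIndR coW (ext2 (twist id) s)) (ext3 (twist id) (coIndL coV coW s)).
Proof.
move=> M h th _ h0.
rewrite /coIndR big_allpairs_dep.
rewrite (big_ext2 _ s (fun p => \sum_(q <- coW p.2) h p.1 q.1 q.2)).
rewrite /ext3 big_allpairs_dep /coIndL big_flatten big_map.
apply: eq_bigr => u _ /=; rewrite big_map /= big_allpairs_dep /=.
have coW_twist a : \sum_(q <- coW (actW a.2 u.2)) h a.1 q.1 q.2 =
    \sum_(d <- Delta a.2) \sum_(q <- coW u.2) h a.1 (actW d.1 q.1) (d.2 * q.2).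
  by apply: big_coW_act (trilin_bilin th a.1) _ => y c /h0; exact.
under eq_bigr => a _ do rewrite coW_twist.
under [RHS]eq_bigr => x _ do under eq_bigr => q _ do rewrite big_map /=.
under [RHS]eq_bigr => x _ do rewrite exchange_big /=.
symmetry; apply: (coV_coassoc
  (h := fun x y z => \sum_(q <- coW u.2) h x (actW y q.1) (z * q.2))).
apply: trilin_sum => q; apply: trilin_comp23 th (actW_linl q.1) _.
by move=> c x y; rewrite mulrDl scalerAl.
Qed.

Lemma ipW_act x w u : ipW (actW x w) u = ipW w (actW (st x) u).
Proof. by rewrite (r_ip_act HW) // (hst_invol HA). Qed.

Lemma ipV_coact v w :
  \sum_(p <- coV w) ipV v p.1 *: p.2 = \sum_(p <- coV v) ipV p.1 w *: st (S p.2).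
Proof. by apply/eqP; rewrite -subr_eq0; apply/eqP; exact: (r_ip_co HV). Qed.

Lemma twist_ip v w v' w' :
  ip2 ipV ipW (twist id v w) (twist id v' w') = ipV v v' * ipW w w'.
Proof.
have [ipV_linr ipV_conj] :=
  (preHilbert_linr (r_preHilbert HV), preHilbert_conj (r_preHilbert HV)).
have [ipW_linr ipW_conj] :=
  (preHilbert_linr (r_preHilbert HW), preHilbert_conj (r_preHilbert HW)).
pose f x y : K^o := ipV v' x * ipW w' y.
have bf : bilin f.
  split=> c x x' y; rewrite /f.
    by rewrite ipV_linr /GRing.scale /= mulrDl mulrA.
  by rewrite ipW_linr /GRing.scale /= mulrDr mulrCA.
(* The conjugates make the summands linear in the [V]-leg, so that the double
   sum becomes a pullback along [twist S] then [twist id]. *)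
have inner a : \sum_(b <- coV v') ipV a.1 b.1 * ipW (actW a.2 w) (actW b.2 w') =
    (\sum_(c <- coV a.1) f c.1 (actW (S c.2) (actW a.2 w)))^*.
  pose G z : K^o := ipW w (actW (st a.2 * z) w').
  have lin_G : linear G.
    by move=> c x y; rewrite /G mulrDr -scalerAr actW_linl ipW_linr.
  transitivity (G (\sum_(b <- coV v') ipV a.1 b.1 *: b.2)).
    rewrite linear_fun_sum //; apply: eq_bigr => b _.
    by rewrite (scalable_linear lin_G) /G ipW_act (r_act_mul HW).
  rewrite ipV_coact linear_fun_sum // rmorph_sum; apply: eq_bigr => c _.
  rewrite (scalable_linear lin_G) /G /f -(hst_antimul HA) -ipW_act -(r_act_mul HW) //.
  by rewrite (ipV_conj c.1) (ipW_conj _ w') rmorphM.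
rewrite /ip2 !big_map /=.
under eq_bigr => a _ do rewrite big_map /= inner.
rewrite -rmorph_sum; transitivity (f v w)^*.
  congr (_^*); rewrite -(twist_idK bf v w) tens_pull_twist.
  by apply: eq_bigr => a _; rewrite tens_pull_twist.
by rewrite /f (ipV_conj v) (ipW_conj w) rmorphM.
Qed.

End InducedRepresentations.

Theorem mainTheorem7 (R : realType) (A : algType R[i])
  (Delta : A -> seq (A * A)) (eps : A -> R[i]) (S : A -> A) (st : A -> A)
  (HA : isCQGHopfStar Delta eps S st)
  (B : A -> Prop) (HB : isRightCoidealStarSubalg Delta st B)
  (V : lmodType R[i]) (ipV : V -> V -> R[i]) (actV : A -> V -> V)
  (coV : V -> seq (V * A))
  (HV : isDKRep Delta eps S st B (@zeroP _ A) ipV actV coV)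
  (W : lmodType R[i]) (ipW : W -> W -> R[i]) (actW : A -> W -> W)
  (coW : W -> seq (W * A))
  (HW : isDKRep Delta eps S st (fun _ => True) (ABplus eps B) ipW actW coW) :
  exists T : V -> W -> seq (V * W),
    [/\ (* T is linear V (.) W -> V (.) W *)
        (forall c v v' w, tens2 (@zeroP _ W) (T (c *: v + v') w)
                                 (scale1 c (T v w) ++ T v' w)) /\
        (forall c v w w', tens2 (@zeroP _ W) (T v (c *: w + w'))
                                 (scale1 c (T v w) ++ T v w')),
        (* T is bijective *)
        (forall s t, tens2 (@zeroP _ W) (ext2 T s) (ext2 T t) ->
                     tens2 (@zeroP _ W) s t) /\
        (forall t, exists s, tens2 (@zeroP _ W) (ext2 T s) t),
        (* T preserves the tensor product inner product *)
        (forall s t, ip2 ipV ipW (ext2 T s) (ext2 T t) = ip2 ipV ipW s t),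
        (* T intertwines the B-actions of _V Ind(W) and Ind^W(V) *)
        (forall b, B b -> forall r : seq (A * A),
           tens2 (@zeroP _ A) (Delta b) r -> {in r, forall p, B p.1} ->
           forall s, tens2 (@zeroP _ W) (ext2 T (actIndL actV b s))
                                        (actIndR actV actW r (ext2 T s))) &
        (* T intertwines the C-coactions *)
        (forall s, tens3 (@zeroP _ W) (ABplus eps B)
                     (coIndR coW (ext2 T s)) (ext3 T (coIndL coV coW s)))].
Proof.
have lin_twist := twist_linear HV HW (@linear_id _ A).
exists (twist coV actW id); split.
- exact: (conj (tens_linear_linl lin_twist) (tens_linear_linr lin_twist)).
- split; first exact: ext2_inj (twist_linear HV HW (hS_lin HA)) (twist_idK HA HV HW).
  exact: ext2_surj (twist_SK HA HV HW).
- exact: ip2_ext2 (twist_ip HA HV HW).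
- by move=> b Bb r Dr Br s; exact: (twist_act HV HW Bb Dr Br s).
- by move=> s; exact: (twist_coact HV HW s).
Qed.
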